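(* Assume Hypothesis C. Let $L$ be a labeling and $\pi$ the priority rule keyed to $L$. Let $\tilde q(\cdot,\cdot)$ and $\tilde r(\cdot)$ be the finalized data obtained by running the Triangularizer on every bandit in accord with $L$, and define the $S\times S$ matrix $\tilde Q^{\pi}$ and the vector $\tilde R^{\pi}$ by $\tilde Q^{\pi}(s,t)=\tilde q(s_{\pi(s)},j)$ if $t=s_{\setminus\pi(s)}\cup\{j\}$ for some $j\in N_{\pi(s)}$ and $\tilde Q^{\pi}(s,t)=0$ otherwise, and $\tilde R^{\pi}(s)=\tilde r(s_{\pi(s)})$. Then $I-\tilde Q^{\pi}$ is invertible, and $\tilde V^{\pi}:=(I-\tilde Q^{\pi})^{-1}\tilde R^{\pi}$, the unique solution of $\tilde V^{\pi}=\tilde R^{\pi}+\tilde Q^{\pi}\tilde V^{\pi}$, satisfies $\tilde V^{\pi}=V^{\pi}$.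
   Context: There are $K$ bandits with pairwise disjoint finite nonempty state sets $N_1,\dots,N_K$; $N=N_1\cup\dots\cup N_K$; $b(j)$ is the $k$ with $j\in N_k$. Bandit $k$ has real transition rates $q(i,j)$ ($i,j\in N_k$) forming $q^k$ and real rewards $r(i)$ forming $r^k$. A multi-state $s$ contains exactly one state $s_k$ of each $N_k$; $S$ is the set of multi-states; $s_{\setminus k}=s\setminus\{s_k\}$. A stationary nonrandomized policy is a map $\delta:S\to\{1,\dots,K\}$. For such $\delta$, $Q^{\delta}(s,t)=q(s_{\delta(s)},j)$ if $t=s_{\setminus\delta(s)}\cup\{j\}$ with $j\in N_{\delta(s)}$, else $0$; $R^{\delta}(s)=r(s_{\delta(s)})$; $V^{\delta}=(I-Q^{\delta})^{-1}R^{\delta}$. A matrix is transient if its powers tend to $0$ entrywise. Hypothesis C: each $q^k$ is entrywise nonnegative and transient, and at least one of the following holds: (RN) each $q^k$ is substochastic ($\sum_{j\in N_k}q(i,j)\le1$); (RA) $r(i)\le0$ for all $i\in N$; (RS) $r(i)\ge0$ for all $i\in N$. (Under Hypothesis C each $Q^{\delta}$ is transient, so $V^{\delta}$ is well defined.) A labeling is an injective map $L:N\cup\{0\}\to\{1,\dots,|N|+1\}$ with $L(0)=|N|+1$; the priority rule keyed to $L$ is $\pi(s)=\arg\min\{L(s_k):1\le k\le K\}$. Triangularizer for bandit $k$ in accord with $L$: start with the tableau $[(I-q^k),r^k]$ and $M=N_k$; at each stage write the current tableau as $[(I-q),r]$. While $M\neq\emptyset$: let $i\in M$ minimize $L(i)$;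 multiply row $i$ by $1/[1-q(i,i)]$; for each $j\in M\setminus\{i\}$ replace row $j$ by itself plus $q(j,i)$ (current value) times the updated row $i$; remove $i$ from $M$. The final tableau is written $[(I-\tilde q^k),\tilde r^k]$; its entries are the finalized data $\tilde q(i,j)$, $\tilde r(i)$. *)

(* Scalars: any archimedean ordered field (covers the reals). *)
From HB Require Import structures.
From mathcomp Require Import all_boot all_order all_algebra.
Set Implicit Arguments. Unset Strict Implicit. Unset Printing Implicit Defensive.
Import Order.TTheory GRing.Theory Num.Theory.
Local Open Scope ring_scope.

Section Bandits.
Variable R : archiRealFieldType.

Definition transient (n : nat) (A : 'M[R]_n) : Prop :=
  forall (i j : 'I_n) (eps : R), 0 < eps ->
    exists N0 : nat, forall m : nat, (N0 <= m)%N -> `|(A ^+ m) i j| < eps.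

Variable T : finType.

Definition restr_mx (D : {set T}) (q : T -> T -> R) : 'M[R]_#|D| :=
  \matrix_(a, c) q (enum_val (A := mem D) a) (enum_val (A := mem D) c).

(* State: (M, A, r) where [A, r] is the current tableau [(I - q), r].   *)
Definition tri_stage (L : T -> nat)
    (st : {set T} * (T -> T -> R) * (T -> R)) :
    {set T} * (T -> T -> R) * (T -> R) :=
  let: (M, A, r) := st in
  match [pick i in M | [forall j in M, (L i <= L j)%N]] with
  | None => st
  | Some i =>
      let c := A i i in                      (* = 1 - q(i,i) *)
      let Ai := fun x => A i x / c in
      let ri := r i / c in
      (* for j <> i, the current q(j,i) equals - A j i *)
      let A' := fun j x => if j == i then Ai x
                 else if j \in M then A j x + (- A j i) * Ai x else A j x in
      let r' := fun j => if j == i then ri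
                 else if j \in M then r j + (- A j i) * ri else r j in
      (M :\ i, A', r')
  end.

(* Run the triangularizer on the state set D with data q, r, labels L.
   Returns the final tableau [(I - qt), rt] (entries meaningful on D). *)
Definition triangularize (L : T -> nat) (D : {set T})
    (q : T -> T -> R) (r : T -> R) : (T -> T -> R) * (T -> R) :=
  let A0 := fun x y => (x == y)%:R - q x y in
  let: (_, A, rv) := iter #|D| (tri_stage L) (D, A0, r) in (A, rv).

End Bandits.

Section Multi.
Variable R : archiRealFieldType.
Variables (K : nat) (N : finType) (b : N -> 'I_K).

Definition bandit_states (k : 'I_K) : {set N} := [set i | b i == k].

Definition multistates : {set {ffun 'I_K -> N}} :=
  [set s : {ffun 'I_K -> N} | [forall k, b (s k) == k]].

Notation msv a := (enum_val (A := mem multistates) a).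

Definition polQ (qf : N -> N -> R) (delta : {ffun 'I_K -> N} -> 'I_K) :
    'M[R]_#|multistates| :=
  \matrix_(a, c)
    let s := msv a in let t := msv c in let k := delta s in
    if [forall k', (k' != k) ==> (t k' == s k')] then qf (s k) (t k) else 0.

Definition polR (rf : N -> R) (delta : {ffun 'I_K -> N} -> 'I_K) :
    'cV[R]_#|multistates| :=
  \col_a rf (msv a (delta (msv a))).

Definition polV (qf : N -> N -> R) (rf : N -> R)
    (delta : {ffun 'I_K -> N} -> 'I_K) : 'cV[R]_#|multistates| :=
  invmx (1%:M - polQ qf delta) *m polR rf delta.

(* labeling: injective L : N u {0} -> {1..|N|+1}, L(0) = |N|+1;
   0 is encoded as None *)
Definition labeling (L : option N -> nat) : Prop :=
  injective L /\ (forall x, (1 <= L x <= #|N|.+1)%N) /\ L None = #|N|.+1.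

(* priority rule keyed to L (k0 is only a default needed by arg min) *)
Definition priority (L : option N -> nat) (k0 : 'I_K)
    (s : {ffun 'I_K -> N}) : 'I_K :=
  [arg min_(k < k0) L (Some (s k))]%N.

Definition fin_q (L : option N -> nat) (q : N -> N -> R) (r : N -> R)
    (i j : N) : R :=
  (i == j)%:R -
  (triangularize (fun x => L (Some x)) (bandit_states (b i)) q r).1 i j.

Definition fin_r (L : option N -> nat) (q : N -> N -> R) (r : N -> R)
    (i : N) : R :=
  (triangularize (fun x => L (Some x)) (bandit_states (b i)) q r).2 i.

Definition hypC (q : N -> N -> R) (r : N -> R) : Prop :=
  (forall i j, b i = b j -> 0 <= q i j) /\
  (forall k, transient (restr_mx (bandit_states k) q)) /\
  ( (forall i, \sum_(j | b j == b i) q i j <= 1)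
    \/ (forall i, r i <= 0)
    \/ (forall i, 0 <= r i) ).

End Multi.

From HB Require Import structures.
From mathcomp Require Import all_boot all_order all_algebra.
From mathcomp Require Import ring lra zify.
Set Implicit Arguments. Unset Strict Implicit. Unset Printing Implicit Defensive.
Import Order.TTheory GRing.Theory Num.Theory.
Local Open Scope ring_scope.

(* Two invertibility criteria for [I - Q]: a positive vector [U] with
      [Q U < U] (Q nonnegative), or a potential strictly decreasing along
      the nonzero entries of Q.
   2. A nonnegative transient kernel admits such weights; gluing them over
      the bandits, the product weight makes every [I - Q^delta] invertible.
   3. Along the Triangularizer the tableau stays weighted diagonally dominant,
      so pivots are positive and the final tableau is unit upper-triangular
      in label order: the finalized kernel only moves to larger labels, and
      [\sum_k (Lmax - L (s k))] is a potential for [\tilde Q^pi].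
   4. Row operations preserve the rows of label at most a threshold.  For a
      multi-state s with active bandit k, moving k to any state of label at
      most L (s k) keeps k active, so V^pi solves those bandit rows; hence it
      solves the finalized row, i.e. [V^pi = \tilde R^pi + \tilde Q^pi V^pi],
      and [\tilde V^pi = V^pi] by uniqueness. *)

Lemma unitmx_of_trivial_kernel (F : fieldType) n (A : 'M[F]_n) :
  (forall w : 'cV_n, A *m w = 0 -> w = 0) -> A \in unitmx.
Proof.
move=> ker0; rewrite -unitmx_tr -row_free_unit; apply: inj_row_free => v vA0.
have : A *m v^T = 0 by rewrite -(trmxK A) -trmx_mul vA0 trmx0.
by move/ker0/(congr1 trmx); rewrite trmxK trmx0.
Qed.

Lemma one_sub_mulmx_entry (F : fieldType) n (Q : 'M[F]_n) (w : 'cV_n) a :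
  ((1%:M - Q) *m w) a 0 = w a 0 - \sum_c Q a c * w c 0.
Proof. by rewrite mulmxBl mul1mx !mxE. Qed.

Lemma fixpoint_entry (F : fieldType) n (Q : 'M[F]_n) (w : 'cV_n) :
  (1%:M - Q) *m w = 0 -> forall a, w a 0 = \sum_c Q a c * w c 0.
Proof.
move=> /matrixP w0 a; apply/eqP; rewrite -subr_eq0 -one_sub_mulmx_entry.
by rewrite w0 mxE.
Qed.

Lemma unitmx_of_potential (F : fieldType) n (Q : 'M[F]_n) (phi : 'I_n -> nat) :
  (forall a c, Q a c != 0 -> (phi c < phi a)%N) -> (1%:M - Q) \in unitmx.
Proof.
move=> phi_dec; apply: unitmx_of_trivial_kernel => w /fixpoint_entry wQw.
have w0 m a : (phi a <= m)%N -> w a 0 = 0.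
  elim: m a => [|m IHm] a le_am; rewrite wQw big1 // => c _;
    have [->|Qac] := eqVneq (Q a c) 0; rewrite ?mul0r //.
    by have := phi_dec a c Qac; lia.
  by rewrite IHm ?mulr0 //; have := phi_dec a c Qac; lia.
by apply/matrixP => a j; rewrite ord1 mxE (w0 (phi a)).
Qed.

(* A nonnegative matrix with a positive vector [U] satisfying [Q U < U]
   entrywise has [1 - Q] invertible: a fixed point [w] is dominated by
   [lam * U], and the row where [|w| / U] is maximal forces [lam = 0]. *)
Lemma unitmx_of_weights (F : realFieldType) n (Q : 'M[F]_n) (U : 'cV[F]_n) :
  (forall a c, 0 <= Q a c) -> (forall a, 0 < U a 0) ->
  (forall a, \sum_c Q a c * U c 0 < U a 0) -> (1%:M - Q) \in unitmx.
Proof.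
move=> Qge0 Ugt0 QU_lt; apply: unitmx_of_trivial_kernel => w /fixpoint_entry wQw.
apply/matrixP => i j; rewrite ord1 mxE.
pose ratio a := `|w a 0| / U a 0.
pose a := [arg max_(a > i) ratio a]%O.
have ratio_max c : ratio c <= ratio a.
  by rewrite /a; case: arg_maxP => // k _; apply.
pose lam := ratio a.
have lam_ge0 : 0 <= lam by rewrite divr_ge0 // ltW.
have w_le c : `|w c 0| <= lam * U c 0 by rewrite -ler_pdivrMr // ratio_max.
have w_a : `|w a 0| = lam * U a 0 by rewrite /lam /ratio divfK // gt_eqF.
have lamU_le : lam * U a 0 <= lam * \sum_c Q a c * U c 0.
  rewrite -w_a wQw mulr_sumr; apply: le_trans (ler_norm_sum _ _ _) _.
  apply: ler_sum => c _; rewrite normrM ger0_norm // mulrCA.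
  exact: ler_wpM2l.
have lam0 : lam = 0.
  apply/eqP; rewrite eq_le lam_ge0 andbT.
  have : lam * (U a 0 - \sum_c Q a c * U c 0) <= 0 by rewrite mulrBr subr_le0.
  by rewrite pmulr_lle0 // subr_gt0.
by apply/eqP; rewrite -normr_eq0 eq_le normr_ge0 andbT -(mul0r (U i 0)) -lam0.
Qed.

Lemma geometric_sum (A : pzRingType) (x : A) m :
  x * (\sum_(l < m) x ^+ l) + 1 = \sum_(l < m) x ^+ l + x ^+ m.
Proof.
elim: m => [|m IHm]; first by rewrite big_ord0 mulr0 add0r.
by rewrite big_ord_recr /= mulrDr -addrAC IHm -exprS.
Qed.

Lemma expmx_ge0 (F : numDomainType) n (Q : 'M[F]_n) :
  (forall a c, 0 <= Q a c) -> forall m a c, 0 <= (Q ^+ m) a c.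
Proof.
move=> Qge0; elim=> [|m IHm] a c; first by rewrite expr0 mxE ler0n.
by rewrite exprS -mulmxE mxE; apply: sumr_ge0 => k _; apply: mulr_ge0.
Qed.

Section TransientWeights.
Variable R : archiRealFieldType.

Lemma transient_uniform n (Q : 'M[R]_n) (eps : R) : transient Q -> 0 < eps ->
  exists N0, forall m a c, (N0 <= m)%N -> `|(Q ^+ m) a c| < eps.
Proof.
move=> trQ eps_gt0.
have [N0 N0P] := fin_all_exists (fun ac : 'I_n * 'I_n => trQ ac.1 ac.2 eps eps_gt0).
exists (\max_(ac : 'I_n * 'I_n) N0 ac)%N => m a c le_m.
by apply: (N0P (a, c)); apply: leq_trans le_m; apply: (leq_bigmax_cond (a, c)).
Qed.

(* A nonnegative transient matrix admits a positive vector [U] with [Q U < U]: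
   take [U = (\sum_(l<m) Q^l) 1] with [Q^m] of row sums below 1, so that
   [Q U = U - 1 + Q^m 1 < U]. *)
Lemma transient_weight_vector n (Q : 'M[R]_n) :
  (forall a c, 0 <= Q a c) -> transient Q ->
  exists2 U : 'cV[R]_n, (forall a, 1 <= U a 0) &
    forall a, \sum_c Q a c * U c 0 < U a 0.
Proof.
move=> Qge0 trQ.
have eps_gt0 : 0 < (n%:R + 1)^-1 :> R by rewrite invr_gt0 ltr_wpDl.
have [m Qm_small] := transient_uniform trQ eps_gt0.
pose one := const_mx 1 : 'cV[R]_n.
pose U := (\sum_(l < m.+1) Q ^+ l) *m one.
have U_ge1 a : 1 <= U a 0.
  rewrite mxE (eq_bigr (fun j => \sum_(l < m.+1) (Q ^+ l) a j)); last first.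
    by move=> j _; rewrite mxE mulr1 summxE.
  rewrite exchange_big big_ord_recl /= expr0 (bigD1 a) //= mxE eqxx.
  rewrite big1 ?addr0 => [|j ja]; last by rewrite mxE eq_sym (negbTE ja).
  rewrite lerDl; apply: sumr_ge0 => l _; apply: sumr_ge0 => j _.
  exact: expmx_ge0.
have QU a : (Q *m U) a 0 + 1 = U a 0 + \sum_c (Q ^+ m.+1) a c.
  have := congr1 (fun M => M *m one) (geometric_sum Q m.+1).
  rewrite /= !mulmxDl -mulmxA mul1mx -/U => /matrixP /(_ a 0).
  rewrite !mxE => ->; congr (_ + _); apply: eq_bigr => c _.
  by rewrite mxE mulr1.
have Qm_row a : \sum_c (Q ^+ m.+1) a c < 1.
  apply: (le_lt_trans (y := \sum_(c < n) (n%:R + 1)^-1)).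
    apply: ler_sum => c _; apply: le_trans (ltW (Qm_small _ a c (leqnSn m))).
    exact: ler_norm.
  rewrite sumr_const card_ord -[_ *+ n]mulr_natr mulrC ltr_pdivrMr ?ltr_wpDl //.
  by rewrite mul1r ltrDl.
exists U => // a; have := QU a; have := Qm_row a; rewrite mxE; lra.
Qed.

Variable T : finType.

Lemma transient_weights (D : {set T}) (q : T -> T -> R) :
  (forall x y, x \in D -> y \in D -> 0 <= q x y) ->
  transient (restr_mx D q) ->
  exists u : T -> R, (forall x, x \in D -> 0 < u x) /\
    forall x, x \in D -> \sum_(y in D) q x y * u y < u x.
Proof.
move=> qge0 trQ.
have [x0 x0D|D0] := pickP (mem D); last first.
  by exists (fun _ => 1); split => x; rewrite [x \in D]D0.
have Qge0 a c : 0 <= restr_mx D q a c by rewrite mxE qge0 ?enum_valP.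
have [U U_ge1 QU_lt] := transient_weight_vector Qge0 trQ.
exists (fun x => U (enum_rank_in x0D x) 0); split => [x _|x xD].
  exact: lt_le_trans ltr01 (U_ge1 _).
have -> : \sum_(y in D) q x y * U (enum_rank_in x0D y) 0
        = \sum_c restr_mx D q (enum_rank_in x0D x) c * U c 0.
  rewrite (big_enum_val (A := mem D)) /=; apply: eq_bigr => c _.
  by rewrite enum_valK_in mxE enum_rankK_in.
exact: QU_lt.
Qed.

End TransientWeights.

Lemma sum_tableau_row (R : pzRingType) (T : finType) (D : {set T}) y (X v : T -> R) :
  y \in D -> \sum_(z in D) ((y == z)%:R - X z) * v z = v y - \sum_(z in D) X z * v z.
Proof.
move=> yD; under eq_bigr => z _ do rewrite mulrBl.
rewrite big_split sumrN /= (big_setD1 y) //= eqxx mul1r big1 ?addr0 // => z.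
by rewrite !inE => /andP[zy _]; rewrite eq_sym (negbTE zy) mul0r.
Qed.

Section Triangularizer.
Variables (R : archiRealFieldType) (T : finType) (L : T -> nat).
Local Notation stage := (tri_stage L).

Definition init_tableau (q : T -> T -> R) : T -> T -> R :=
  fun x y => (x == y)%:R - q x y.

Lemma tri_stage_pivot (M : {set T}) (A : T -> T -> R) (rv : T -> R) :
  M != set0 ->
  exists2 i, i \in M & (forall j, j \in M -> (L i <= L j)%N) /\
    stage (M, A, rv) =
    (M :\ i,
     (fun j x => if j == i then A i x / A i i
                 else if j \in M then A j x + (- A j i) * (A i x / A i i)
                 else A j x),
     (fun j => if j == i then rv i / A i i
               else if j \in M then rv j + (- A j i) * (rv i / A i i)
               else rv j)).
Proof.
move=> Mn0; rewrite /tri_stage; case: pickP => [i /andP[iM /forall_inP imin]|none].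
  by exists i.
case/set0Pn: Mn0 => x0 x0M; have [i iM imin] := arg_minnP L x0M.
have /= := none i; rewrite (iM : i \in M) (_ : [forall j in M, _]) //.
by apply/forall_inP.
Qed.

Lemma tri_stage_set0 (A : T -> T -> R) (rv : T -> R) :
  stage (set0, A, rv) = (set0, A, rv).
Proof. by rewrite /tri_stage; case: pickP => [i /andP[]|]; rewrite ?inE. Qed.

Lemma card_tri_stage (M : {set T}) (A : T -> T -> R) (rv : T -> R) :
  #|(stage (M, A, rv)).1.1| = #|M|.-1.
Proof.
have [->|Mn0] := eqVneq M set0; first by rewrite tri_stage_set0 cards0.
by have [i iM [_ ->]] := tri_stage_pivot A rv Mn0; rewrite /= (cardsD1 i M) iM.
Qed.

Lemma card_iter_tri_stage l (M : {set T}) (A : T -> T -> R) (rv : T -> R) :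
  #|(iter l stage (M, A, rv)).1.1| = (#|M| - l)%N.
Proof.
elim: l => [|l IHl]; first by rewrite subn0.
by rewrite iterS; case: (iter l _ _) IHl => [[M' A'] rv'] /= IHl;
  rewrite card_tri_stage IHl subnS.
Qed.

Lemma iter_tri_stage_ind (P : {set T} * (T -> T -> R) * (T -> R) -> Prop) l st :
  (forall st, P st -> P (stage st)) -> P st -> P (iter l stage st).
Proof. by move=> Pstage Pst; elim: l => //= l; apply: Pstage. Qed.

Variable D : {set T}.

Definition rows_solved (v : T -> R) (th : nat) (A : T -> T -> R) (rv : T -> R) :=
  forall x, x \in D -> (L x <= th)%N -> \sum_(z in D) A x z * v z = rv x.

(* Row operations preserve such solutions, because a row of label [<= th] is
   only combined with the pivot row, whose label is smaller. *)
Lemma tri_stage_rows_solved v th (M : {set T}) A rv :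
  M \subset D -> rows_solved v th A rv ->
  let: (M', A', rv') := stage (M, A, rv) in M' \subset D /\ rows_solved v th A' rv'.
Proof.
move=> MD solved.
have [->|Mn0] := eqVneq M set0; first by rewrite tri_stage_set0 sub0set.
have [i iM [imin ->]] := tri_stage_pivot A rv Mn0.
have iD : i \in D by apply: (subsetP MD).
split => [|x xD le_x]; first exact: subset_trans (subD1set M i) MD.
have [xi|xi] := eqVneq x i.
  subst x; rewrite -(solved i iD le_x) mulr_suml.
  by apply: eq_bigr => z _; rewrite mulrAC.
case: ifP => xM; last exact: solved.
have le_i : (L i <= th)%N by apply: leq_trans (imin x xM) le_x.
rewrite -(solved x xD le_x) -(solved i iD le_i) mulr_suml mulr_sumr -big_split.
by apply: eq_bigr => z _ /=; ring.
Qed.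

Lemma triangularize_rows_solved v th q r A rv :
  rows_solved v th (init_tableau q) r -> triangularize L D q r = (A, rv) ->
  rows_solved v th A rv.
Proof.
move=> solved0; rewrite /triangularize -/(init_tableau q).
pose P (st : {set T} * (T -> T -> R) * (T -> R)) :=
  let: (M, A, rv) := st in M \subset D /\ rows_solved v th A rv.
have : P (iter #|D| stage (D, init_tableau q, r)).
  apply: iter_tri_stage_ind => [[[M A'] rv']|] //= [MD solved].
  exact: tri_stage_rows_solved.
by case: (iter _ _ _) => [[M A'] rv'] [_ ?] [<- <-].
Qed.

(* Elimination keeps the tableau "weighted diagonally dominant" on the pending
   set [M], for a fixed positive weight [u] on [D]; this makes every pivot
   positive. *)
Variable u : T -> R.
Hypothesis u_gt0 : forall x, x \in D -> 0 < u x.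

Definition elimination_inv (M : {set T}) (A : T -> T -> R) :=
  [/\ M \subset D,
      forall x, x \in D -> x \notin M -> A x x = 1 /\
        forall y, y \in D -> (L y < L x)%N -> A x y = 0,
      forall j y, j \in M -> y \in D -> y \notin M -> A j y = 0,
      forall j y, j \in M -> y \in M -> y != j -> A j y <= 0 &
      forall j, j \in M -> 0 < \sum_(y in M) A j y * u y].

(* Pending diagonal entries are positive: the off-diagonal part of the
   weighted row sum is nonpositive. *)
Lemma pivot_gt0 M A i : elimination_inv M A -> i \in M -> 0 < A i i.
Proof.
case=> MD _ _ off_le0 wsum_gt0 iM.
have := wsum_gt0 i iM; rewrite (big_setD1 i iM) /=.
have rest_le0 : \sum_(y in M :\ i) A i y * u y <= 0.
  rewrite -oppr_ge0 -sumrN; apply: sumr_ge0 => y; rewrite !inE => /andP[yi yM].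
  rewrite oppr_ge0 mulr_le0_ge0 ?off_le0 // ltW // u_gt0 //.
  exact: (subsetP MD).
move=> sum_gt0; have : 0 < A i i * u i by lra.
by rewrite pmulr_lgt0 // u_gt0 // (subsetP MD).
Qed.

(* Eliminating the pivot [i] from a pending row [j] keeps its weighted sum
   positive: the new row is row [j] plus a nonnegative multiple of row [i]. *)
Lemma eliminated_row_weight_gt0 M A i j :
  elimination_inv M A -> i \in M -> j \in M -> j != i ->
  0 < \sum_(y in M :\ i) (A j y + (- A j i) * (A i y / A i i)) * u y.
Proof.
move=> inv iM jM ji; have Aii_gt0 := pivot_gt0 inv iM.
case: inv => _ _ _ off_le0 wsum_gt0.
have := wsum_gt0 j jM; have := wsum_gt0 i iM.
rewrite !(big_setD1 i iM) /=.
set Sj := \sum_(y in M :\ i) A j y * u y.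
set Si := \sum_(y in M :\ i) A i y * u y => Si_gt0 Sj_gt0.
have c_ge0 : 0 <= - A j i / A i i.
  by apply: divr_ge0; [rewrite oppr_ge0 off_le0 // eq_sym | exact: ltW].
have Aii_neq0 : A i i != 0 by rewrite gt_eqF.
rewrite (eq_bigr (fun y => A j y * u y + (- A j i / A i i) * (A i y * u y)));
  last by move=> y _; field.
rewrite big_split /= -mulr_sumr -/Sj -/Si.
have : 0 <= (- A j i / A i i) * (A i i * u i + Si) by rewrite mulr_ge0 // ltW.
have -> : (- A j i / A i i) * (A i i * u i + Si)
          = - A j i * u i + (- A j i / A i i) * Si.
  by field.
lra.
Qed.

(* The invariant survives a stage; the finished clause for the new pivot
   holds because it has the least label among the pending states. *)
Lemma tri_stage_elimination_inv M A rv : elimination_inv M A ->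
  let: (M', A', _) := stage (M, A, rv) in elimination_inv M' A'.
Proof.
have [->|Mn0] := eqVneq M set0; first by rewrite tri_stage_set0.
move=> inv.
have [i iM [imin ->]] := tri_stage_pivot A rv Mn0.
have Aii_gt0 := pivot_gt0 inv iM; have Aii_neq0 := lt0r_neq0 Aii_gt0.
have wsum_gt0 := eliminated_row_weight_gt0 inv iM.
case: inv => MD finished pending_zero off_le0 _.
split.
- exact: subset_trans (subD1set M i) MD.
- move=> x xD; rewrite !inE negb_and negbK => /orP[/eqP->|xM].
    rewrite eqxx mulfV //; split => // y yD lt_yi.
    have yM : y \notin M by apply: contraTN lt_yi => yM; rewrite -leqNgt imin.
    by rewrite pending_zero // mul0r.
  by rewrite (negbTE (memPnC xM i iM)) (negbTE xM); apply: finished.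
- move=> j y; rewrite !inE => /andP[ji jM] yD; rewrite negb_and negbK.
  rewrite (negbTE ji) jM => /orP[/eqP->|yM]; first by rewrite mulfV // mulr1 addrN.
  by rewrite (pending_zero j y) ?(pending_zero i y) // mul0r mulr0 addr0.
- move=> j y; rewrite !inE => /andP[ji jM] /andP[yi yM] yj.
  rewrite (negbTE ji) jM.
  have nAji_ge0 : - A j i >= 0 by rewrite oppr_ge0 off_le0 // eq_sym.
  have Aiy_le0 : A i y / A i i <= 0.
    by rewrite pmulr_lle0 ?invr_gt0 // off_le0.
  have := off_le0 j y jM yM yj; have := mulr_ge0_le0 nAji_ge0 Aiy_le0; lra.
- move=> j; rewrite !inE => /andP[ji jM]; rewrite (negbTE ji) jM.
  exact: wsum_gt0.
Qed.

Lemma init_elimination_inv q :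
  (forall x y, x \in D -> y \in D -> 0 <= q x y) ->
  (forall x, x \in D -> \sum_(y in D) q x y * u y < u x) ->
  elimination_inv D (init_tableau q).
Proof.
move=> q_ge0 qu_lt; split=> // [x -> //|j y _ -> //|j y jD yD yj|j jD].
  by rewrite /init_tableau eq_sym (negbTE yj) sub0r oppr_le0 q_ge0.
by rewrite sum_tableau_row // subr_gt0 qu_lt.
Qed.

Lemma triangularize_upper q r A rv :
  (forall x y, x \in D -> y \in D -> 0 <= q x y) ->
  (forall x, x \in D -> \sum_(y in D) q x y * u y < u x) ->
  triangularize L D q r = (A, rv) ->
  forall x, x \in D -> A x x = 1 /\
    forall y, y \in D -> (L y < L x)%N -> A x y = 0.
Proof.
move=> q_ge0 qu_lt; rewrite /triangularize -/(init_tableau q).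
have := card_iter_tri_stage #|D| D (init_tableau q) r; rewrite subnn.
pose P (st : {set T} * (T -> T -> R) * (T -> R)) :=
  let: (M, A, _) := st in elimination_inv M A.
have : P (iter #|D| stage (D, init_tableau q, r)).
  apply: iter_tri_stage_ind; last exact: init_elimination_inv.
  by move=> [[M A'] rv'] /=; apply: tri_stage_elimination_inv.
case: (iter _ _ _) => [[M A'] rv'] [_ finished _ _ _] /= /cards0_eq M0 [<- _].
by move=> x xD; apply: finished; rewrite // M0 inE.
Qed.

End Triangularizer.

Section MultiStates.
Variables (R : archiRealFieldType) (K : nat) (N : finType) (b : N -> 'I_K).
Local Notation ms := (multistates b).
Local Notation msv a := (enum_val (A := mem ms) a).

Definition upd (s : {ffun 'I_K -> N}) (k : 'I_K) (z : N) : {ffun 'I_K -> N} :=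
  [ffun k' => if k' == k then z else s k'].

Lemma updE s k z k' : upd s k z k' = if k' == k then z else s k'.
Proof. by rewrite ffunE. Qed.

Lemma upd_at s k z : upd s k z k = z.
Proof. by rewrite updE eqxx. Qed.

Lemma upd_id s k : upd s k (s k) = s.
Proof. by apply/ffunP => k'; rewrite updE; case: eqP => [->|]. Qed.

Lemma upd_upd s k y z : upd (upd s k y) k z = upd s k z.
Proof. by apply/ffunP => k'; rewrite !updE; case: eqP. Qed.

Lemma ms_b s k : s \in ms -> b (s k) = k.
Proof. by rewrite inE => /forallP /(_ k) /eqP. Qed.

Lemma upd_ms s k z : s \in ms -> b z = k -> upd s k z \in ms.
Proof.
move=> sms bz; rewrite inE; apply/forallP => k'; rewrite updE.
by have [->|_] := eqVneq k' k; [rewrite bz | rewrite ms_b].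
Qed.

Lemma agree_upd (t s : {ffun 'I_K -> N}) k :
  [forall k', (k' != k) ==> (t k' == s k')] -> t = upd s k (t k).
Proof.
move/forallP => agree; apply/ffunP => k'; rewrite updE.
by case: eqP => [->//|/eqP nk]; move: (agree k'); rewrite nk => /eqP.
Qed.

Lemma upd_agree s k z : [forall k', (k' != k) ==> (upd s k z k' == s k')].
Proof.
by apply/forallP => k'; rewrite updE; have [->|_] := eqVneq k' k; rewrite ?eqxx.
Qed.

Lemma sum_moves s k (F : N -> {ffun 'I_K -> N} -> R) : s \in ms ->
  \sum_(c < #|ms|) (if [forall k', (k' != k) ==> (msv c k' == s k')]
                    then F (msv c k) (msv c) else 0)
  = \sum_(z in bandit_states b k) F z (upd s k z).
Proof.
move=> sms.
transitivity (\sum_(t in ms) (if [forall k', (k' != k) ==> (t k' == s k')]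
                              then F (t k) t else 0)).
  by rewrite (big_enum_val (A := mem ms)).
transitivity (\sum_(t in ms) \sum_(z in bandit_states b k)
                 (if t == upd s k z then F z (upd s k z) else 0)).
  apply: eq_bigr => t tms; case: ifP => agree.
    rewrite (bigD1 (t k)) /=; last by rewrite inE ms_b.
    rewrite -(agree_upd agree) eqxx big1 ?addr0 // => z /andP[_ zt].
    by case: eqP => // tE; move: zt; rewrite tE upd_at eqxx.
  by rewrite big1 // => z _; case: eqP => // tE; move: agree; rewrite tE upd_agree.
rewrite exchange_big /=; apply: eq_bigr => z; rewrite inE => /eqP bz.
rewrite (bigD1 (upd s k z)) /=; last exact: upd_ms.
by rewrite eqxx big1 ?addr0 // => t /andP[_ tn]; rewrite (negbTE tn).
Qed.

Lemma polQ_row (qf : N -> N -> R) delta (W : 'cV[R]_#|ms|) x0 (x0ms : x0 \in ms) a :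
  \sum_c polQ b qf delta a c * W c 0 =
  \sum_(z in bandit_states b (delta (msv a)))
     qf (msv a (delta (msv a))) z
       * W (enum_rank_in x0ms (upd (msv a) (delta (msv a)) z)) 0.
Proof.
rewrite -(sum_moves (delta (msv a))
  (fun z t => qf (msv a (delta (msv a))) z * W (enum_rank_in x0ms t) 0)
  (enum_valP a)).
apply: eq_bigr => c _; rewrite mxE /=; case: ifP => _; rewrite ?mul0r //.
by rewrite enum_valK_in.
Qed.

Variables (L : option N -> nat) (k0 : 'I_K).
Hypothesis L_inj : injective L.
Local Notation pi := (priority L k0).

Lemma priority_min (s : {ffun 'I_K -> N}) k :
  (L (Some (s (pi s))) <= L (Some (s k)))%N.
Proof. by rewrite /priority; case: arg_minnP => // k' _; apply. Qed.

(* Moving the active bandit of [s] to a state of no larger label keeps it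
   active: labels are distinct, so it still carries the least label. *)
Lemma priority_upd s y : s \in ms -> b y = pi s ->
  (L (Some y) <= L (Some (s (pi s))))%N -> pi (upd s (pi s) y) = pi s.
Proof.
move=> sms by_k le_y; set k := pi s; set k' := pi (upd s k y).
have [//|nk] := eqVneq k' k.
have := priority_min (upd s k y) k; rewrite -/k' upd_at updE (negbTE nk) => le1.
have le2 := priority_min s k'; rewrite -/k in le2.
have /L_inj[] : L (Some (s k')) = L (Some (s k)).
  by apply/eqP; rewrite eqn_leq le2 (leq_trans le1 le_y).
by move/(congr1 b); rewrite !ms_b.
Qed.

End MultiStates.

Lemma bandit_q_ge0 (R : numDomainType) (K : nat) (N : finType) (b : N -> 'I_K)
    (q : N -> N -> R) :
  (forall i j, b i = b j -> 0 <= q i j) ->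
  forall k x y, x \in bandit_states b k -> y \in bandit_states b k -> 0 <= q x y.
Proof.
by move=> q_ge0 k x y; rewrite !inE => /eqP bx /eqP by'; rewrite q_ge0 // bx by'.
Qed.

Lemma bandit_weights (R : archiRealFieldType) (K : nat) (N : finType)
    (b : N -> 'I_K) (q : N -> N -> R) :
  (forall i j, b i = b j -> 0 <= q i j) ->
  (forall k, transient (restr_mx (bandit_states b k) q)) ->
  exists2 u : N -> R, (forall x, 0 < u x) &
    forall k x, x \in bandit_states b k ->
      \sum_(y in bandit_states b k) q x y * u y < u x.
Proof.
move=> q_ge0 q_tr.
have [uk ukP] := fin_all_exists (fun k =>
  transient_weights (@bandit_q_ge0 _ _ _ b q q_ge0 k) (q_tr k)).
exists (fun x => uk (b x) x) => [x|k x xk]; first by apply: (ukP (b x)).1; rewrite inE.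
move: (xk); rewrite inE => /eqP ->.
rewrite (eq_bigr (fun y => q x y * uk k y)) => [|y]; first exact: (ukP k).2.
by rewrite inE => /eqP ->.
Qed.

Section PriorityRule.
Variables (R : archiRealFieldType) (K : nat) (N : finType) (b : N -> 'I_K).
Variables (q : N -> N -> R) (r : N -> R) (L : option N -> nat) (k0 : 'I_K).
Hypothesis q_ge0 : forall i j, b i = b j -> 0 <= q i j.
Hypothesis L_inj : injective L.
Variable u : N -> R.
Hypothesis u_gt0 : forall x, 0 < u x.
Hypothesis qu_lt : forall k x, x \in bandit_states b k ->
  \sum_(y in bandit_states b k) q x y * u y < u x.

Local Notation ms := (multistates b).
Local Notation msv a := (enum_val (A := mem ms) a).
Local Notation pi := (priority L k0).
Local Notation label := (fun x : N => L (Some x)).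

(* [I - Q^delta] is invertible for every policy [delta]: the product weight
   [U s = \prod_k u (s k)] satisfies [Q^delta U < U]. *)
Lemma polQ_unitmx (delta : {ffun 'I_K -> N} -> 'I_K) :
  (1%:M - polQ b q delta) \in unitmx.
Proof.
pose U := \col_a \prod_k u (msv a k) : 'cV[R]_#|ms|.
apply: (unitmx_of_weights (U := U)) => [a c|a|a].
- by rewrite mxE /=; case: ifP => // _; apply: q_ge0; rewrite !ms_b ?enum_valP.
- by rewrite mxE; apply: prodr_gt0.
have sms := enum_valP a; rewrite (polQ_row _ _ _ sms).
set s := msv a in sms *; set k := delta s.
have U_upd z : z \in bandit_states b k ->
    U (enum_rank_in sms (upd s k z)) 0 = u z * \prod_(k' | k' != k) u (s k').
  rewrite inE => /eqP bz; rewrite mxE enum_rankK_in ?upd_ms //.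
  rewrite (bigD1 k) //= upd_at; congr (_ * _); apply: eq_bigr => k' nk.
  by rewrite updE (negbTE nk).
under eq_bigr => z zk do rewrite U_upd // mulrA.
rewrite -mulr_suml mxE [X in _ < X](bigD1 k) //= ltr_pM2r ?prodr_gt0 //.
by apply: qu_lt; rewrite inE ms_b.
Qed.

Lemma fin_q_label_increasing i j : b j = b i -> fin_q b L q r i j != 0 ->
  (label i < label j)%N.
Proof.
move=> bj; rewrite /fin_q.
case E: (triangularize label (bandit_states b (b i)) q r) => [A rv] /=.
have ik : i \in bandit_states b (b i) by rewrite inE.
have jk : j \in bandit_states b (b i) by rewrite inE bj.
have [A_ii A_low] := triangularize_upper (fun x _ => u_gt0 x)
  (bandit_q_ge0 q_ge0 (k := b i)) (@qu_lt (b i)) E ik.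
case: ltngtP => // [lt_ji|/L_inj[] <-]; last by rewrite eqxx A_ii subrr eqxx.
have ij : (i == j) = false by apply: contraTF lt_ji => /eqP ->; rewrite ltnn.
by rewrite A_low // ij subrr eqxx.
Qed.

(* Hence [I - \tilde Q^pi] is invertible: every transition raises the label
   of one component and keeps the others, so the potential
   [\sum_k (Lmax - L (s k))] strictly decreases. *)
Lemma fin_polQ_unitmx : (1%:M - polQ b (fin_q b L q r) pi) \in unitmx.
Proof.
pose Lmax := (\max_(x : option N) L x)%N.
pose phi (s : {ffun 'I_K -> N}) := (\sum_(k < K) (Lmax - label (s k)))%N.
apply: (unitmx_of_potential (phi := fun a => phi (msv a))) => a c.
rewrite mxE /=; set s := msv a; set t := msv c; set k := pi s.
case: ifP => [agree nz|_]; last by rewrite eqxx.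
have lt_st : (label (s k) < label (t k))%N.
  by apply: fin_q_label_increasing nz; rewrite !ms_b ?enum_valP.
have le_max : (label (t k) <= Lmax)%N by apply: (leq_bigmax (Some (t k))).
rewrite /phi {1}(agree_upd agree) (bigD1 k) //= [X in (_ < X)%N](bigD1 k) //=.
rewrite upd_at (eq_bigr (fun k' => Lmax - label (s k'))%N) => [|k' nk].
  by rewrite ltn_add2r ltn_sub2lE.
by rewrite updE (negbTE nk).
Qed.

Local Notation W := (polV b q r pi).

Lemma polV_row a :
  W a 0 - \sum_c polQ b q pi a c * W c 0 = r (msv a (pi (msv a))).
Proof.
have : (1%:M - polQ b q pi) *m W = polR b r pi by apply: mulKVmx; apply: polQ_unitmx.
by move=> /matrixP /(_ a 0); rewrite one_sub_mulmx_entry => ->; rewrite mxE.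
Qed.

(* Fix a multi-state [s] with active bandit [k], and let [v z] be the value
   of [s] with bandit [k] moved to [z].  Every state [y] of bandit [k] with
   label at most that of [s k] leaves [k] active, so [v] solves the rows of
   the bandit system [(I - q^k) v = r^k] of label at most [L (s k)]. *)
Lemma value_solves_bandit_rows a :
  let s := msv a in let k := pi s in
  rows_solved label (bandit_states b k)
    (fun z => W (enum_rank_in (enum_valP a) (upd s k z)) 0)
    (label (s k)) (init_tableau q) r.
Proof.
move=> s k y; rewrite inE => /eqP by_k le_y; rewrite sum_tableau_row ?inE ?by_k //.
have sms : s \in ms := enum_valP a.
have tms : upd s k y \in ms by apply: upd_ms.
have := polV_row (enum_rank_in (enum_valP a) (upd s k y)).
rewrite (polQ_row _ _ _ (enum_valP a)) enum_rankK_in //.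
rewrite (priority_upd L_inj sms by_k le_y) upd_at.
by under eq_bigr => z _ do rewrite upd_upd.
Qed.

(* Consequently [V^pi] also solves [V = \tilde R^pi + \tilde Q^pi V]: the
   finalized row of [s k] is obtained from those rows by elimination. *)
Lemma polV_fin_row a :
  W a 0 - \sum_c polQ b (fin_q b L q r) pi a c * W c 0
  = fin_r b L q r (msv a (pi (msv a))).
Proof.
rewrite (polQ_row _ _ _ (enum_valP a)).
set s := msv a; set k := pi s; set i := s k.
have bi : b i = k by apply: ms_b; apply: enum_valP.
have ik : i \in bandit_states b k by rewrite inE bi.
rewrite /fin_q /fin_r bi.
case E: (triangularize label (bandit_states b k) q r) => [A rv] /=.
have := triangularize_rows_solved (@value_solves_bandit_rows a) E ik (leqnn _).
by rewrite -/s -/k -/i => <-; rewrite sum_tableau_row // upd_id enum_valK_in subKr.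
Qed.

Lemma polV_fin_equation :
  (1%:M - polQ b (fin_q b L q r) pi) *m W = polR b (fin_r b L q r) pi.
Proof.
by apply/matrixP => a j; rewrite ord1 one_sub_mulmx_entry polV_fin_row /polR mxE.
Qed.

End PriorityRule.

Theorem proposition3p3 (R : archiRealFieldType) (K : nat) (hK : (0 < K)%N)
    (N : finType) (b : N -> 'I_K)
    (hne : forall k : 'I_K, exists i : N, b i = k)
    (q : N -> N -> R) (r : N -> R) (L : option N -> nat) :
  hypC b q r -> labeling L ->
  let pi := priority L (Ordinal hK) in
  (1%:M - polQ b (fin_q b L q r) pi) \in unitmx /\
  polV b (fin_q b L q r) (fin_r b L q r) pi = polV b q r pi.
Proof.
move=> [q_ge0 [q_tr _]] [L_inj _] pi.
have [u u_gt0 qu_lt] := bandit_weights q_ge0 q_tr.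
have fin_unit := fin_polQ_unitmx r (Ordinal hK) q_ge0 L_inj u_gt0 qu_lt.
split => //.
by rewrite /polV -(polV_fin_equation r (Ordinal hK) q_ge0 L_inj u_gt0 qu_lt) mulKmx.
Qed.
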